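(* Let $n>s\ge1$ be integers and $g(x)=\sum_{i=0}^sa_ix^i\in\mathbb{R}[x]$ of degree $s$ with nonzero discriminant, and let $f(t,x)=x^n+t\,g(x)$. Suppose $g$ has no real roots, $n-s$ is even, and $a_s>0$. Then for every real $\beta>\max\{\alpha\in\mathbb{R}\mid \Delta_{f,x}(\alpha)=0\}$, the polynomial $f(\beta,x)$ has no real roots (it is totally complex).
   Context: $\Delta_{f,x}(t)$ denotes the discriminant of $f(t,x)$ with respect to $x$, a polynomial in $t$ (it vanishes at $t=0$). A real polynomial is totally complex if it has no real roots. *)

From HB Require Import structures.
From mathcomp Require Import all_boot all_order all_algebra.
Set Implicit Arguments. Unset Strict Implicit. Unset Printing Implicit Defensive.
Import Order.TTheory GRing.Theory Num.Theory.
Local Open Scope ring_scope.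

Definition discriminant (R : comUnitRingType) (p : {poly R}) : R :=
  let d := (size p).-1 in
  (-1) ^+ ((d * d.-1) %/ 2) * (lead_coef p)^-1 * resultant p p^`().

(* f(t,x) = x^n + t g(x), as a polynomial in x whose coefficients are
   polynomials in t. *)
Definition fpoly (R : idomainType) (n : nat) (g : {poly R}) : {poly {poly R}} :=
  'X^n + map_poly polyC g * ('X : {poly R})%:P.

Definition spec_t (R : idomainType) (b : R) (F : {poly {poly R}}) : {poly R} :=
  map_poly (fun c : {poly R} => c.[b]) F.

Definition totally_complex (R : numDomainType) (p : {poly R}) : Prop :=
  forall x : R, ~~ root p x.

From HB Require Import structures.
From mathcomp Require Import all_boot all_order all_algebra.
From mathcomp Require Import polyrcf.
Import Order.TTheory GRing.Theory Num.Theory.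
Local Open Scope ring_scope.

(* Since f(0,x) = x^n has the multiple root 0, the discriminant of f vanishes
   at t = 0, so beta > 0.  A real polynomial without real roots has even degree
   and, with positive leading coefficient, is positive everywhere; hence s and
   n are even and x^n + beta g(x) > 0 for every real x. *)

Lemma lead_coef_deriv (R : nzSemiRingType) (p : {poly R}) :
  lead_coef p *+ (size p).-1 != 0 -> lead_coef p^`() = lead_coef p *+ (size p).-1.
Proof.
set d := (size p).-1 => lc_d_neq0.
have d_gt0 : (0 < d)%N by case: d lc_d_neq0 => //; rewrite mulr0n eqxx.
have size_p : size p = d.+1 by move: d_gt0; rewrite /d; case: (size p).
have coef_d : p^`()`_d.-1 = lead_coef p *+ d.
  by rewrite coef_deriv prednK // lead_coefE.
have size_p' : size p^`() = d.
  apply/anti_leq/andP; split.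
    by rewrite -ltnS -size_p lt_size_deriv // -size_poly_gt0 size_p.
  rewrite -(prednK d_gt0) ltnNge; apply/negP => /leq_sizeP/(_ _ (leqnn _)).
  by rewrite coef_d; apply/eqP.
by rewrite lead_coefE size_p' coef_d.
Qed.

Lemma spec_tE (R : idomainType) (b : R) (F : {poly {poly R}}) :
  spec_t b F = map_poly (horner_eval b) F.
Proof. by []. Qed.

Lemma root_discriminant_monic (R : idomainType) (F : {poly {poly R}}) (b : R) :
  F \is monic -> ((size F).-1)%:R != 0 :> R ->
  root (discriminant F) b = (resultant (spec_t b F) (spec_t b F)^`() == 0).
Proof.
move=> /monicP lcF d_neq0.
have lcF' : lead_coef F^`() = ((size F).-1)%:R%:P.
  by rewrite lead_coef_deriv lcF -?polyC1 -?polyCMn ?polyC_eq0.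
rewrite /root /discriminant lcF invr1 mulr1 hornerM mulf_eq0.
have -> : ((-1) ^+ ((size F).-1 * (size F).-1.-1 %/ 2) : {poly R}).[b] == 0 = false.
  by rewrite horner_exp hornerN hornerC signr_eq0.
rewrite /=.
have -> : (resultant F F^`()).[b] = horner_eval b (resultant F F^`()) by [].
rewrite spec_tE deriv_map map_resultant // ?lcF ?lcF'.
- by rewrite rmorph1 oner_neq0.
- by rewrite /= /horner_eval hornerC.
Qed.

Lemma resultant_common_root (R : idomainType) (p q : {poly R}) (x : R) :
  p != 0 -> root p x -> root q x -> resultant p q = 0.
Proof.
move=> p_neq0 px qx; apply/eqP; rewrite resultant_eq0.
by apply: (@root_size_gt1 _ x); rewrite ?gcdp_eq0 ?negb_and ?p_neq0 // root_gcd px.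
Qed.

Lemma spec_t_fpoly (R : idomainType) (n : nat) (g : {poly R}) (b : R) :
  spec_t b (fpoly n g) = 'X^n + b *: g.
Proof.
rewrite spec_tE /fpoly rmorphD /= rmorphXn /= map_polyX rmorphM /= map_polyC /=.
rewrite -map_poly_comp (@eq_map_poly _ _ _ id) ?map_poly_id //; last first.
  by move=> c /=; rewrite /horner_eval hornerC.
by rewrite /horner_eval hornerX mulrC mul_polyC.
Qed.

Lemma size_fpoly_tail (R : idomainType) (g : {poly R}) :
  size (map_poly polyC g * ('X : {poly R})%:P) = size g.
Proof.
have [-> | g_neq0] := eqVneq g 0; first by rewrite map_poly0 mul0r !size_poly0.
rewrite size_mul ?map_polyC_eq0 ?polyC_eq0 ?polyX_eq0 //.
by rewrite size_map_polyC size_polyC polyX_eq0 addn1.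
Qed.

Lemma fpoly_monic (R : idomainType) (n : nat) (g : {poly R}) :
  (size g <= n)%N -> fpoly n g \is monic.
Proof.
by move=> size_g; rewrite monicE lead_coefDl ?lead_coefXn ?size_fpoly_tail ?size_polyXn.
Qed.

Lemma size_fpoly (R : idomainType) (n : nat) (g : {poly R}) :
  (size g <= n)%N -> size (fpoly n g) = n.+1.
Proof.
by move=> size_g; rewrite size_polyDl size_polyXn // size_fpoly_tail.
Qed.

Lemma root_discriminant_fpoly0 (R : numDomainType) (n : nat) (g : {poly R}) :
  (1 < n)%N -> (size g <= n)%N -> root (discriminant (fpoly n g)) 0.
Proof.
move=> n_gt1 size_g; have n_gt0 := ltnW n_gt1.
rewrite root_discriminant_monic ?fpoly_monic ?size_fpoly ?pnatr_eq0 -?lt0n //.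
rewrite spec_t_fpoly scale0r addr0 derivXn; apply/eqP.
apply: (@resultant_common_root _ _ _ 0); rewrite ?monic_neq0 ?monicXn //.
  by rewrite rootE hornerXn expr0n eqn0Ngt n_gt0.
by rewrite rootE hornerMn hornerXn expr0n eqn0Ngt -ltnS prednK // n_gt1 mul0rn.
Qed.

Lemma totally_complex_odd_size (R : rcfType) (p : {poly R}) :
  totally_complex p -> odd (size p).
Proof.
by move=> p_tc; apply/negPn/negP => /odd_poly_root [x px]; case/negP: (p_tc x).
Qed.

Lemma totally_complex_horner_gt0 (R : rcfType) (p : {poly R}) (x : R) :
  totally_complex p -> 0 < lead_coef p -> 0 < p.[x].
Proof.
move=> p_tc lc_gt0; have := @sgp_pinftyP R x p (fun y _ => p_tc y) x.
rewrite in_itv /= lexx => /(_ isT); rewrite /sgp_pinfty (gtr0_sg lc_gt0) => /eqP.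
by rewrite sgr_cp0.
Qed.

Theorem mainTheorem8 (R : rcfType) (n s : nat) (g : {poly R}) :
  (1 <= s)%N -> (s < n)%N ->
  size g = s.+1 ->
  discriminant g != 0 ->
  totally_complex g ->
  ~~ odd (n - s) ->
  0 < lead_coef g ->
  forall beta : R,
    (forall alpha : R, root (discriminant (fpoly n g)) alpha -> alpha < beta) ->
    totally_complex (spec_t beta (fpoly n g)).
Proof.
move=> s_gt0 s_lt_n size_g _ g_tc n_s_even lc_g_gt0 beta disc_roots_lt.
have beta_gt0 : 0 < beta.
  apply/disc_roots_lt/root_discriminant_fpoly0; last by rewrite size_g.
  exact: leq_ltn_trans s_lt_n.
have n_even : ~~ odd n.
  have := @totally_complex_odd_size _ g g_tc; rewrite size_g /= => s_even.
  by move: n_s_even; rewrite oddB ?(ltnW s_lt_n) // (negPf s_even) addbF.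
move=> x; rewrite spec_t_fpoly rootE hornerD hornerXn hornerZ lt0r_neq0 //.
by rewrite ltr_wpDl ?exprn_even_ge0 // mulr_gt0 // totally_complex_horner_gt0.
Qed.
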